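(* For every sequence ${\mathbf s}=(s_1,\dots,s_l)$ in $\widehat{\mathcal S}$ with $l\ge1$ we have ${\mathcal Y}_T({\mathbf s})=\Delta({\mathcal Y}_T({\mathbf s}'))\oplus(c^{\alpha_l})^{-1}\big(\Delta({\mathcal Y}_T({\mathbf s}'))\big)\subset\bigoplus_{\sigma\in I({\mathbf s})}Q_T$.
   Context: $R$ irreducible reduced finite root system (positive roots $R^+$, simple roots $\Pi$, highest root $\gamma$); $\widehat X=X\oplus\mathbb Z$, $\delta=(0,-1)$, affine roots $\widehat R=\{\alpha+n\delta\}$. $\widehat{\mathcal W}$ generated by $s_{\alpha,n}(v,m)=(v-(\langle\alpha,v\rangle-mn)\alpha^\vee,m)$, acting contragrediently on $\widehat X$ (permuting $\widehat R$); $\widehat{\mathcal S}=\{s_{\alpha,0}:\alpha\in\Pi\}\cup\{s_{\gamma,1}\}$ with simple affine roots $\alpha$ resp. $-\gamma+\delta$. $T$: commutative unital domain, $2$ not a zero divisor, affine roots nonzero in $\widehat X\otimes T$; $S_T$ the symmetric algebra of $\widehat X\otimes T$; $Q_T=S_T[2^{-1}][\alpha^{-1}:\alpha\in\widehat R]$. For ${\mathbf s}$: $I({\mathbf s})$ = strictly increasing tuples in $\{1,\dots,l\}$, $\operatorname{ev}(i_1,\dots,i_n)=s_{i_1}\cdots s_{i_n}$; ${\mathbf s}'=(s_1,\dots,s_{l-1})$, $I({\mathbf s})=I({\mathbf s}')\sqcup I({\mathbf s}')s_l$; $\Delta\colon\bigoplus_{I({\mathbf s}')}Q_T\to\bigoplus_{I({\mathbf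 s})}Q_T$, $\Delta(z)_\gamma=\Delta(z)_{\gamma s_l}=z_\gamma$; $c^\lambda$ multiplies the $\sigma$-component by $\operatorname{ev}(\sigma)(\lambda)\otimes 1$, and $c^{\alpha_l}$ ($\alpha_l$ the simple affine root of $s_l$) is invertible on $\bigoplus_{I({\mathbf s})}Q_T$. ${\mathcal Y}_T(\emptyset)=S_T\subset Q_T$, ${\mathcal Y}_T({\mathbf s})=\Delta({\mathcal Y}_T({\mathbf s}'))+(c^{\alpha_l})^{-1}(\Delta({\mathcal Y}_T({\mathbf s}')))$. *)

From HB Require Import structures.
From mathcomp Require Import all_boot all_order all_algebra.
From mathcomp Require Import mpoly.

Set Implicit Arguments.
Unset Strict Implicit.
Unset Printing Implicit Defensive.

Import Order.TTheory GRing.Theory Num.Theory.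
Local Open Scope ring_scope.

(* The lattice X is Z^n, modelled as 'rV[int]_n; its dual X^v is also      *)
(* 'rV[int]_n, with the standard pairing <x, v> = sum_i x_i v_i.           *)
Definition pairing (n : nat) (x v : 'rV[int]_n) : int := \sum_(i < n) x 0 i * v 0 i.

Section RootSystem.
Variable n : nat.
Variable R : seq 'rV[int]_n.
Variable cor : 'rV[int]_n -> 'rV[int]_n.      (* alpha |-> alpha^v in X^v *)

Definition refl (a x : 'rV[int]_n) : 'rV[int]_n := x - (pairing x (cor a)) *: a.

Definition irred_reduced_root_system : Prop :=
  [/\ uniq R, R != [::] & (0 : 'rV[int]_n) \notin R] /\
  (forall a, a \in R -> pairing a (cor a) = 2) /\
  (forall a b, a \in R -> b \in R -> refl a b \in R) /\
  (forall a b, a \in R -> b \in R ->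
      cor (refl a b) = cor b - (pairing a (cor b)) *: cor a) /\
  (forall a b, a \in R -> b \in R -> forall c d : int, c != 0 ->
      c *: b = d *: a -> b = a \/ b = - a) /\
  (forall P : pred 'rV[int]_n,
      (forall a b, a \in R -> b \in R -> P a -> ~~ P b ->
         pairing b (cor a) = 0) ->
      all P R \/ all (predC P) R).

Variable Pi : seq 'rV[int]_n.

Definition lincomb (c : 'I_(size Pi) -> int) : 'rV[int]_n :=
  \sum_(i < size Pi) c i *: Pi`_i.

Definition is_base : Prop :=
  [/\ uniq Pi, all (fun a => a \in R) Pi,
      (forall c, lincomb c = 0 -> forall i, c i = 0)
    & (forall a, a \in R -> exists c, a = lincomb c /\
          ((forall i, 0 <= c i) \/ (forall i, c i <= 0)))].

Definition positive_root (a : 'rV[int]_n) : Prop :=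
  a \in R /\ exists c, a = lincomb c /\ forall i, 0 <= c i.

Definition is_highest_root (gam : 'rV[int]_n) : Prop :=
  gam \in R /\ forall a, a \in R -> exists c, gam - a = lincomb c /\ forall i, 0 <= c i.

Variable gam : 'rV[int]_n.

(* Xhat = X (+) Z; delta = (0, -1); the affine root alpha + m delta is (alpha, -m). *)
Definition Xhat := ('rV[int]_n * int)%type.

Definition aff_refl (a : 'rV[int]_n) (m : int) (x : Xhat) : Xhat :=
  (x.1 - pairing x.1 (cor a) *: a, x.2 - m * pairing x.1 (cor a)).

(* simple affine reflections S^ : Some i = s_{alpha_i,0}, None = s_{gam,1} *)
Definition Shat := option 'I_(size Pi).

Definition sref (o : Shat) : Xhat -> Xhat :=
  match o with Some i => aff_refl Pi`_i 0 | None => aff_refl gam 1 end.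

(* the simple affine root of a simple affine reflection: alpha_i resp. -gam + delta *)
Definition sroot (o : Shat) : Xhat :=
  match o with Some i => (Pi`_i, 0) | None => (- gam, -1) end.

(* ev(i_1,...,i_m) = s_{i_1} ... s_{i_m} (indices 1-based into s), acting on Xhat *)
Definition ev (s : seq Shat) (sigma : seq nat) (x : Xhat) : Xhat :=
  foldr (fun i acc => sref (nth None s i.-1) acc) x sigma.

Variable T : idomainType.

(* S_T = Sym(Xhat (x) T) = T[x_0,...,x_n] via the standard basis of Z^n (+) Z *)
Definition ST := {mpoly T[n.+1]}.

Definition coordX (x : Xhat) (i : 'I_n.+1) : int :=
  if (insub (val i) : option 'I_n) is Some j then x.1 0 j else x.2.

(* lambda |-> lambda (x) 1 in S_T *)
Definition lin (x : Xhat) : ST := \sum_(i < n.+1) ((coordX x i)%:~R : T) *: 'X_i.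

(* Q_T is realised inside the fraction field K of the domain S_T *)
Definition K := {fraction ST}.
Definition toK (p : ST) : K := FracField.tofrac p.

Definition affine_root (d : Xhat) : bool := d.1 \in R.

Definition inQ (q : K) : Prop :=
  exists (p : ST) (k : nat) (ds : seq Xhat), all affine_root ds /\
    q = toK p / toK (2%:R ^+ k * \prod_(d <- ds) lin d).

(* elements of (+)_{sigma in I(s)} Q_T are functions seq nat -> K supported on I(s) *)
Definition Vec := seq nat -> K.

Definition inI (l : nat) (sigma : seq nat) : bool :=
  sorted ltn sigma && all (fun i => (0 < i <= l)%N) sigma.

Definition vadd (y w : Vec) : Vec := fun sigma => y sigma + w sigma.

(* Delta : (+)_{I(s')} Q_T -> (+)_{I(s)} Q_T, Delta(z)_g = Delta(z)_{g s_l} = z_g *)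
Definition Delta (l : nat) (z : Vec) : Vec :=
  fun sigma => if inI l sigma then z [seq i <- sigma | i != l] else 0.

(* c^lambda and its inverse (multiplication / division by ev(sigma)(lambda) (x) 1) *)
Definition cmul (s : seq Shat) (lam : Xhat) (z : Vec) : Vec :=
  fun sigma => toK (lin (ev s sigma lam)) * z sigma.
Definition cinv (s : seq Shat) (lam : Xhat) (z : Vec) : Vec :=
  fun sigma => z sigma / toK (lin (ev s sigma lam)).

Fixpoint Yrec (r : seq Shat) : Vec -> Prop :=
  match r with
  | [::] => fun z => (exists p : ST, z [::] = toK p) /\
                     (forall sigma, sigma != [::] -> z sigma = 0)
  | a :: r' => fun z => exists y1 y2, Yrec r' y1 /\ Yrec r' y2 /\
      z = vadd (Delta (size r) y1) (cinv (rev r) (sroot a) (Delta (size r) y2))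
  end.

Definition Y (s : seq Shat) : Vec -> Prop := Yrec (rev s).

End RootSystem.

From HB Require Import structures.
From mathcomp Require Import all_boot all_order all_algebra.
From mathcomp Require Import mpoly.
From Stdlib Require Import FunctionalExtensionality.
Set Implicit Arguments.
Unset Strict Implicit.
Unset Printing Implicit Defensive.

Import Order.TTheory GRing.Theory Num.Theory.
Local Open Scope ring_scope.

(* The recursive description of Y_T(s) is the definition of Y, so only the
   directness of the sum needs an argument.  The point is that s_l sends its
   simple affine root alpha_l to -alpha_l, hence ev(sigma s_l)(alpha_l) =
   -ev(sigma)(alpha_l): on the two components sigma and sigma s_l the element
   Delta y1 + (c^alpha_l)^-1 Delta y2 reads y1 + y2/a and y1 - y2/a for the
   same a, and since 2 is invertible y1 and y2/a are recovered. *)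

Lemma inI_filter l sigma : inI l.+1 sigma -> inI l [seq i <- sigma | i != l.+1].
Proof.
case/andP=> sorted_sigma /allP sigma_in; apply/andP; split.
  exact/sorted_filter/sorted_sigma/ltn_trans.
rewrite all_filter; apply/allP=> i /sigma_in /andP[i_gt0 i_le] /=.
by apply/implyP=> i_neq; rewrite i_gt0 -ltnS ltn_neqAle i_neq.
Qed.

Lemma inI_S l tau : inI l tau -> inI l.+1 tau.
Proof.
case/andP=> sorted_tau /allP tau_in; rewrite /inI sorted_tau.
by apply/allP=> i /tau_in /andP[-> /leqW].
Qed.

Lemma inI_rcons l tau : inI l tau -> inI l.+1 (rcons tau l.+1).
Proof.
move=> tau_in; have /andP[sorted_tau /allP tau_le] := tau_in.
have /andP[_ /allP tau_leS] := inI_S tau_in.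
rewrite /inI all_rcons leqnn; apply/and3P; split=> //; last exact/allP.
case: tau sorted_tau tau_le {tau_in tau_leS} => //= i tau path_tau tau_le.
rewrite rcons_path path_tau /=.
by have /andP[_] := tau_le _ (mem_last i tau).
Qed.

Lemma filter_inI l tau : inI l tau -> [seq i <- tau | i != l.+1] = tau.
Proof.
case/andP=> _ /allP tau_in; apply/all_filterP/allP=> i /tau_in /andP[_ i_le].
by rewrite neq_ltn ltnS i_le.
Qed.

Section Delta.
Variables (n : nat) (T : idomainType) (l : nat).

Lemma Delta_inI (z : Vec n T) tau : inI l tau -> Delta l.+1 z tau = z tau.
Proof. by move=> tau_in; rewrite /Delta inI_S // filter_inI. Qed.

Lemma Delta_rcons (z : Vec n T) tau :
  inI l tau -> Delta l.+1 z (rcons tau l.+1) = z tau.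
Proof.
move=> tau_in; rewrite /Delta inI_rcons // -cats1 filter_cat /= eqxx cats0.
by rewrite filter_inI.
Qed.

End Delta.

Section Localisation.
Variables (n : nat) (R : seq 'rV[int]_n) (T : idomainType).

Definition Qdenom (d : ST n T) : Prop :=
  exists k ds, all (affine_root R) ds /\ d = 2%:R ^+ k * \prod_(x <- ds) lin T x.

Lemma inQE (q : K n T) : inQ R q <-> exists p d, Qdenom d /\ q = toK p / toK d.
Proof.
split=> [[p [k [ds [ds_aff ->]]]] | [p [_ [[k [ds [ds_aff ->]]] ->]]]].
  by exists p, (2%:R ^+ k * \prod_(x <- ds) lin T x); split; first exists k, ds.
by exists p, k, ds.
Qed.

Lemma QdenomM d1 d2 : Qdenom d1 -> Qdenom d2 -> Qdenom (d1 * d2).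
Proof.
move=> [k1 [ds1 [ds1_aff ->]]] [k2 [ds2 [ds2_aff ->]]].
exists (k1 + k2)%N, (ds1 ++ ds2); rewrite all_cat ds1_aff ds2_aff big_cat exprD.
by split=> //; rewrite mulrACA.
Qed.

Lemma inQ_toK (p : ST n T) : inQ R (toK p).
Proof.
apply/inQE; exists p, 1; split; last by rewrite /toK tofrac1 invr1 mulr1.
by exists 0%N, [::]; rewrite big_nil mulr1.
Qed.

Lemma inQD (q1 q2 : K n T) : inQ R q1 -> inQ R q2 -> inQ R (q1 + q2).
Proof.
move=> /inQE[p1 [d1 [d1_den ->]]] /inQE[p2 [d2 [d2_den ->]]].
(* A zero denominator only yields the junk value x / 0 = 0, which is why the
   nonvanishing of affine roots in S_T is never needed. *)
have [d1_0|d1_neq0] := eqVneq (toK d1) 0.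
  by rewrite d1_0 invr0 mulr0 add0r; apply/inQE; exists p2, d2.
have [d2_0|d2_neq0] := eqVneq (toK d2) 0.
  by rewrite d2_0 invr0 mulr0 addr0; apply/inQE; exists p1, d1.
rewrite (addf_div _ _ d1_neq0 d2_neq0); apply/inQE.
exists (p1 * d2 + p2 * d1), (d1 * d2); split; first exact: QdenomM.
by rewrite /toK tofracD !tofracM.
Qed.

Lemma inQ_divl (q : K n T) d :
  affine_root R d -> inQ R q -> inQ R (q / toK (lin T d)).
Proof.
move=> d_aff /inQE[p [e [e_den ->]]]; apply/inQE; exists p, (e * lin T d).
split; last by rewrite -mulrA -invfM /toK tofracM.
apply: QdenomM => //; exists 0%N, [:: d].
by rewrite /= d_aff mul1r big_seq1.
Qed.

Lemma natr_K_neq0 k : (k%:R : T) != 0 -> (k%:R : K n T) != 0.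
Proof.
move=> k_neq0; have -> : (k%:R : K n T) = toK k%:R by rewrite /toK rmorph_nat.
have -> : (k%:R : ST n T) = (k%:R : T)%:MP_[n.+1] by rewrite rmorph_nat.
by rewrite /toK tofrac_eq0 mpolyC_eq0.
Qed.

End Localisation.

Section AffineAction.
Variables (n : nat) (cor : 'rV[int]_n -> 'rV[int]_n).
Variables (Pi : seq 'rV[int]_n) (gam : 'rV[int]_n).

Lemma pairingNl (x v : 'rV[int]_n) : pairing (- x) v = - pairing x v.
Proof. by rewrite /pairing -sumrN; apply: eq_bigr => i _; rewrite mxE mulNr. Qed.

Lemma aff_reflN a m (x : Xhat n) : aff_refl cor a m (- x) = - aff_refl cor a m x.
Proof.
rewrite /aff_refl /= pairingNl scaleNr mulrN !opprK.
by congr (_, _); rewrite opprB addrC.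
Qed.

Lemma evN (s : seq (Shat Pi)) sigma (x : Xhat n) :
  ev cor gam s sigma (- x) = - ev cor gam s sigma x.
Proof.
elim: sigma => //= i sigma ->.
by case: (nth None s i.-1) => [j|]; rewrite /= aff_reflN.
Qed.

Lemma ev_rcons (s : seq (Shat Pi)) sigma l x :
  ev cor gam s (rcons sigma l) x = ev cor gam s sigma (sref cor gam (nth None s l.-1) x).
Proof. by rewrite /ev foldr_rcons. Qed.

Lemma sref_sroot (o : Shat Pi) :
  (forall a, a \in gam :: Pi -> pairing a (cor a) = 2) ->
  sref cor gam o (sroot gam o) = - sroot gam o.
Proof.
have twice (v : 'rV[int]_n) : (2 : int) *: v = v + v by rewrite scaler_nat mulr2n.
case: o => [i|] coroot2; rewrite /= /aff_refl /=.
  rewrite coroot2 ?inE ?mem_nth ?orbT // twice mul0r subr0.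
  by congr (_, _); rewrite opprD addNKr.
rewrite pairingNl coroot2 ?mem_head // scaleNr twice opprK.
by congr (_, _); rewrite /= opprK addKr.
Qed.

Lemma ev_rcons_sroot (s' : seq (Shat Pi)) a sigma :
  (forall b, b \in gam :: Pi -> pairing b (cor b) = 2) ->
  ev cor gam (rcons s' a) (rcons sigma (size s').+1) (sroot gam a) =
  - ev cor gam (rcons s' a) sigma (sroot gam a).
Proof.
by move=> coroot2; rewrite ev_rcons /= nth_rcons ltnn eqxx sref_sroot // evN.
Qed.

Section Roots.
Variable R : seq 'rV[int]_n.
Hypothesis reflR : forall a b, a \in R -> b \in R -> refl cor a b \in R.
Hypotheses (gamR : gam \in R) (PiR : {subset Pi <= R}).

Lemma sroot_root (o : Shat Pi) :
  pairing gam (cor gam) = 2 -> (sroot gam o).1 \in R.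
Proof.
case: o => [i|] /= coroot2; first exact/PiR/mem_nth.
have <- : refl cor gam gam = - gam.
  by rewrite /refl coroot2 scaler_nat mulr2n opprD addNKr.
exact: reflR.
Qed.

Lemma ev_root (s : seq (Shat Pi)) sigma (x : Xhat n) :
  x.1 \in R -> (ev cor gam s sigma x).1 \in R.
Proof.
move=> xR; elim: sigma => //= i sigma IH.
by case: (nth None s i.-1) => [j|] /=; apply: reflR => //; apply/PiR/mem_nth.
Qed.

End Roots.

End AffineAction.

Lemma linN n (T : idomainType) (x : Xhat n) : lin T (- x) = - lin T x.
Proof.
rewrite /lin -sumrN; apply: eq_bigr => i _.
by rewrite /coordX /=; case: insub => [j|] /=; rewrite ?mxE rmorphN scaleNr.
Qed.

Lemma halves_eq (F : idomainType) (x w x' w' : F) :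
  2%:R != 0 :> F -> x + w = x' + w' -> x - w = x' - w' -> x = x'.
Proof.
move=> two_neq0 sum_eq diff_eq; apply: (mulIf two_neq0).
rewrite !mulr_natr !mulr2n.
have : (x + w) + (x - w) = (x' + w') + (x' - w') by rewrite sum_eq diff_eq.
by rewrite addrACA subrr addr0 [RHS]addrACA subrr addr0.
Qed.

Section Y.
Variables (n : nat) (cor : 'rV[int]_n -> 'rV[int]_n).
Variables (Pi : seq 'rV[int]_n) (gam : 'rV[int]_n) (T : idomainType).

Lemma Y_rcons (s' : seq (Shat Pi)) a (z : Vec n T) :
  Y cor gam (rcons s' a) z <->
  exists y1 y2, Y cor gam s' y1 /\ Y cor gam s' y2 /\
    z = vadd (Delta (size s').+1 y1)
             (cinv cor gam (rcons s' a) (sroot gam a) (Delta (size s').+1 y2)).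
Proof. by rewrite /Y rev_rcons /= size_rev rev_cons revK. Qed.

Lemma Delta_cinv_direct (s' : seq (Shat Pi)) a (y1 y2 y1' y2' : Vec n T) :
  (2%:R : T) != 0 ->
  (forall b, b \in gam :: Pi -> pairing b (cor b) = 2) ->
  let D := Delta (size s').+1 in
  let Ci := cinv cor gam (rcons s' a) (sroot gam a) in
  vadd (D y1) (Ci (D y2)) = vadd (D y1') (Ci (D y2')) -> D y1 = D y1'.
Proof.
move=> two_neq0 coroot2 D Ci E; apply: functional_extensionality => sigma.
rewrite {1 2}/D /Delta; case: ifP => // /inI_filter tau_in.
set tau := [seq i <- sigma | _].
have := congr1 (fun f => f (rcons tau (size s').+1)) E.
have := congr1 (fun f => f tau) E.
rewrite /vadd /Ci /cinv /D !(Delta_rcons _ tau_in) !(Delta_inI _ tau_in).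
rewrite ev_rcons_sroot // linN /toK tofracN invrN !mulrN.
exact/halves_eq/natr_K_neq0.
Qed.

Variable R : seq 'rV[int]_n.
Hypothesis reflR : forall a b, a \in R -> b \in R -> refl cor a b \in R.
Hypotheses (gamR : gam \in R) (PiR : {subset Pi <= R}).
Hypothesis srootR : forall o : Shat Pi, (sroot gam o).1 \in R.

Lemma Yrec_support (r : seq (Shat Pi)) (z : Vec n T) : Yrec cor gam r z ->
  forall sigma, (inI (size r) sigma -> inQ R (z sigma)) /\
                (~~ inI (size r) sigma -> z sigma = 0).
Proof.
elim: r z => [|a r IH] z.
  move=> [[p z_nil] z_cons] [|i sigma].
    by rewrite z_nil; split=> // _; apply: inQ_toK.
  split=> [/andP[_ /andP[/andP[i_gt0 i_le0] _]] | _]; last exact: z_cons.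
  by have := leq_trans i_gt0 i_le0.
move=> [y1 [y2 [/IH y1_supp [/IH y2_supp ->]]]] sigma.
rewrite /vadd /cinv /Delta.
case: ifP => [/inI_filter tau_in | _]; last by rewrite mul0r addr0.
split=> // _; apply: inQD; first exact: (y1_supp _).1.
exact/inQ_divl/(y2_supp _).1/tau_in/ev_root/srootR.
Qed.

Lemma Y_support (s : seq (Shat Pi)) (z : Vec n T) : Y cor gam s z ->
  forall sigma, (inI (size s) sigma -> inQ R (z sigma)) /\
                (~~ inI (size s) sigma -> z sigma = 0).
Proof. by rewrite -size_rev; apply: Yrec_support. Qed.

End Y.

Theorem lemma6p7 (n : nat) (R : seq 'rV[int]_n) (cor : 'rV[int]_n -> 'rV[int]_n)
  (Pi : seq 'rV[int]_n) (gam : 'rV[int]_n) (T : idomainType) :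
  irred_reduced_root_system R cor ->
  is_base R Pi ->
  is_highest_root R Pi gam ->
  (2%:R : T) != 0 ->
  (forall d : Xhat n, affine_root R d -> lin T d != 0) ->
  forall (s' : seq (Shat Pi)) (a : Shat Pi),
  let s := rcons s' a in
  let l := size s in
  let D := @Delta n T l in
  let Ci := @cinv n cor Pi gam T s (sroot gam a) in
  (forall z, @Y n cor Pi gam T s z <->
     exists y1 y2, @Y n cor Pi gam T s' y1 /\ @Y n cor Pi gam T s' y2 /\ z = vadd (D y1) (Ci (D y2))) /\
  (forall y1 y2 y1' y2', @Y n cor Pi gam T s' y1 -> @Y n cor Pi gam T s' y2 ->
     @Y n cor Pi gam T s' y1' -> @Y n cor Pi gam T s' y2' ->
     vadd (D y1) (Ci (D y2)) = vadd (D y1') (Ci (D y2')) ->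
     D y1 = D y1' /\ Ci (D y2) = Ci (D y2')) /\
  (forall z, @Y n cor Pi gam T s z -> forall sigma : seq nat,
     (inI l sigma -> @inQ n R T (z sigma)) /\ (~~ inI l sigma -> z sigma = 0)).
Proof.
move=> [_ [coroot2R [reflR _]]] [_ /allP PiR _ _] [gamR _] two_neq0 _ s' a s l D Ci.
have coroot2 b : b \in gam :: Pi -> pairing b (cor b) = 2.
  by rewrite inE => /predU1P[-> | /PiR]; apply: coroot2R.
have srootR o := sroot_root reflR gamR PiR o (coroot2R _ gamR).
have El : l = (size s').+1 by rewrite /l size_rcons.
split; first by move=> z; rewrite /D El; apply: Y_rcons.
split; last by move=> z; apply: (Y_support reflR gamR PiR srootR).
move=> y1 y2 y1' y2' _ _ _ _ E.
have D_eq : D y1 = D y1' by move: E; rewrite /D El; apply: Delta_cinv_direct.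
split=> //; apply: functional_extensionality => sigma.
by move: (congr1 (fun f => f sigma) E); rewrite /vadd D_eq => /addrI.
Qed.
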